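(* In the setting of a Laplacian consistent coarsening of a connected weighted graph with combinatorial Laplacian $L$, fix a level $\ell$ with contraction family $\mathcal P_\ell=\{\mathcal V_{\ell-1}^{(1)},\dots,\mathcal V_{\ell-1}^{(N_\ell)}\}$ and let $\sigma_\ell=\|S_{\ell-1}\Pi_\ell^\perp A_{\ell-1}\|_2$ (with $A_{\ell-1}$, $S_{\ell-1}$, $\Pi_\ell^\perp$ as defined below). Then $$\sigma_\ell^2\le\sum_{\mathcal C\in\mathcal P_\ell}\|\Pi_{\mathcal C}^\perp A_{\ell-1}\|_{L_{\mathcal C}}^2,$$ where $\|M\|_{L_{\mathcal C}}:=\|L_{\mathcal C}^{1/2}M\|_2$ (spectral norm).
   Context: Laplacian consistent coarsening: $G_0=G$, $L_0=L$; at each level $\ell$ a surjective map $\varphi_\ell:\mathcal V_{\ell-1}\to\mathcal V_\ell=\{v'_1,\dots,v'_{N_\ell}\}$ defines contraction sets $\mathcal V_{\ell-1}^{(r)}=\varphi_\ell^{-1}(v'_r)$, each inducing a connected subgraph of $G_{\ell-1}$; $P_\ell(r,i)=1/|\mathcal V_{\ell-1}^{(r)}|$ if $v_i\in\mathcal V_{\ell-1}^{(r)}$, else $0$; $P_\ell^+(i,r)=1$ if $v_i\in\mathcal V_{\ell-1}^{(r)}$, else $0$; $L_\ell=(P_\ell^+)^\top L_{\ell-1}P_\ell^+$, the Laplacian of $G_\ell$ with weight matrix $W_\ell$. $\Pi_\ell^\perp=I-P_\ell^+P_\ell$ and $L_{\ell-1}=S_{\ell-1}^\top S_{\ell-1}$.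 Given a $k$-dimensional subspace $\mathbf R\subseteq\mathbb R^N$ with orthonormal basis $V$: $A_0=B_0=VV^\top L^{+1/2}$ and, for $\ell\ge2$, $B_{\ell-1}=P_{\ell-1}B_{\ell-2}$, $A_{\ell-1}=B_{\ell-1}(B_{\ell-1}^\top L_{\ell-1}B_{\ell-1})^{+1/2}$ ($M^{+1/2}$ is the pseudoinverse of the PSD square root). For a vertex set $\mathcal C\subseteq\mathcal V_{\ell-1}$: $\Pi_{\mathcal C}^\perp$ is the $N_{\ell-1}\times N_{\ell-1}$ matrix with $[\Pi_{\mathcal C}^\perp x](i)=x(i)-\frac{1}{|\mathcal C|}\sum_{v_j\in\mathcal C}x(j)$ if $v_i\in\mathcal C$ and $0$ otherwise; $L_{\mathcal C}$ is the $N_{\ell-1}\times N_{\ell-1}$ combinatorial Laplacian with weights $W_{\mathcal C}(i,j)=W_{\ell-1}(i,j)$ if $v_i,v_j\in\mathcal C$, $W_{\mathcal C}(i,j)=2W_{\ell-1}(i,j)$ if exactly one of $v_i,v_j$ is in $\mathcal C$, and $0$ otherwise. *)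

From HB Require Import structures.
From mathcomp Require Import all_boot all_order all_algebra.
From Stdlib Require Import ClassicalEpsilon.
Set Implicit Arguments. Unset Strict Implicit. Unset Printing Implicit Defensive.
Import Order.TTheory GRing.Theory Num.Theory.
Local Open Scope ring_scope.

Definition sqnorm (R : rcfType) n (x : 'cV[R]_n) : R := \sum_(i < n) x i 0 ^+ 2.

Definition is_spectral_norm (R : rcfType) m n (M : 'M[R]_(m, n)) (s : R) : Prop :=
  [/\ 0 <= s,
      (forall x : 'cV[R]_n, sqnorm (M *m x) <= s ^+ 2 * sqnorm x) &
      (forall c : R, 0 <= c ->
         (forall x : 'cV[R]_n, sqnorm (M *m x) <= c ^+ 2 * sqnorm x) -> s <= c)].

Definition psd (R : rcfType) n (M : 'M[R]_n) : Prop :=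
  M^T = M /\ forall x : 'cV[R]_n, 0 <= (x^T *m M *m x) 0 0.

Definition is_psd_sqrt (R : rcfType) n (M X : 'M[R]_n) : Prop :=
  psd X /\ X *m X = M.

Definition is_pinv (R : rcfType) n (X Y : 'M[R]_n) : Prop :=
  [/\ X *m Y *m X = X, Y *m X *m Y = Y, (X *m Y)^T = X *m Y & (Y *m X)^T = Y *m X].

Definition is_pinv_psd_sqrt (R : rcfType) n (M Y : 'M[R]_n) : Prop :=
  exists X, is_psd_sqrt M X /\ is_pinv X Y.

Definition pinv_psd_sqrt (R : rcfType) n (M : 'M[R]_n) : 'M[R]_n :=
  epsilon (inhabits (0 : 'M[R]_n)) (is_pinv_psd_sqrt M).

Definition is_Lnorm (R : rcfType) n m (L : 'M[R]_n) (M : 'M[R]_(n, m)) (s : R) : Prop :=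
  exists X, is_psd_sqrt L X /\ is_spectral_norm (X *m M) s.

Definition is_weight_matrix (R : rcfType) n (W : 'M[R]_n) : Prop :=
  [/\ W^T = W, (forall i j, 0 <= W i j) & (forall i, W i i = 0)].

Definition lap (R : rcfType) n (W : 'M[R]_n) : 'M[R]_n :=
  \matrix_(i, j) ((i == j)%:R * (\sum_(k < n) W i k) - W i j).

Definition induces_connected (R : rcfType) n (W : 'M[R]_n) (C : {set 'I_n}) : Prop :=
  forall i j, i \in C -> j \in C ->
    connect [rel a b | [&& a \in C, b \in C & 0 < W a b]] i j.

(* ---------- the coarsening hierarchy ----------
   N k = N_k (number of vertices at level k), phi k = varphi_{k+1} : V_k -> V_{k+1}. *)
Section Coarsening.
Variables (R : rcfType) (N : nat -> nat) (phi : forall k, 'I_(N k) -> 'I_(N k.+1)).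

Definition clus k (r : 'I_(N k.+1)) : {set 'I_(N k)} := [set i | phi i == r].

Definition Pmat k : 'M[R]_(N k.+1, N k) :=
  \matrix_(r, i) (if phi i == r then (#|clus r|%:R)^-1 else 0).

Definition Pplus k : 'M[R]_(N k, N k.+1) :=
  \matrix_(i, r) (phi i == r)%:R.

Variable W : 'M[R]_(N 0).

Fixpoint Lev k : 'M[R]_(N k) :=
  match k with
  | 0 => lap W
  | k'.+1 => (Pplus k')^T *m Lev k' *m Pplus k'
  end.

Definition Wlev k : 'M[R]_(N k) :=
  \matrix_(i, j) (if i == j then 0 else - Lev k i j).

Definition Piperp k : 'M[R]_(N k) := 1%:M - Pplus k *m Pmat k.

Variables (d : nat) (V : 'M[R]_(N 0, d)).

Definition B0 : 'M[R]_(N 0, N 0) := V *m V^T *m pinv_psd_sqrt (lap W).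

Fixpoint Bmat k : 'M[R]_(N k, N 0) :=
  match k with
  | 0 => B0
  | k'.+1 => Pmat k' *m Bmat k'
  end.

Definition Amat k : 'M[R]_(N k, N 0) :=
  match k as k0 return 'M[R]_(N k0, N 0) with
  | 0 => B0
  | k'.+1 => Bmat k'.+1 *m
             pinv_psd_sqrt ((Bmat k'.+1)^T *m Lev k'.+1 *m Bmat k'.+1)
  end.

End Coarsening.

Definition PiC (R : rcfType) n (C : {set 'I_n}) : 'M[R]_n :=
  \matrix_(i, j) (if i \in C then (i == j)%:R - (j \in C)%:R / #|C|%:R else 0).

Definition WC (R : rcfType) n (W : 'M[R]_n) (C : {set 'I_n}) : 'M[R]_n :=
  \matrix_(i, j) (if (i \in C) && (j \in C) then W i j
                  else if (i \in C) (+) (j \in C) then 2 * W i j else 0).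

Definition LC (R : rcfType) n (W : 'M[R]_n) (C : {set 'I_n}) : 'M[R]_n :=
  lap (WC W C).

(* Write y = A_{l-1} x and z = Pi_l^perp y.  Then |S Pi_l^perp y|^2 is the Dirichlet
   energy sum_{ij} W(i,j) (z_i - z_j)^2 / 2 of z on G_{l-1} (L_{l-1} is again a graph
   Laplacian, since aggregation keeps symmetry, zero row sums and nonpositive
   off-diagonal entries), while Pi_C^perp y is the restriction of z to the cluster C.
   An edge inside a cluster contributes the same amount to the energy of that
   restriction under L_C; a cut edge of weight w between two clusters carries weight
   2w in both of their L_C, and w (a - b)^2 <= 2w a^2 + 2w b^2.  Hence
   |S Pi_l^perp A x|^2 <= sum_C |L_C^{1/2} Pi_C^perp A x|^2 <= (sum_C n_C^2) |x|^2,
   and minimality of the spectral norm gives the claim. *)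

From HB Require Import structures.
From mathcomp Require Import all_boot all_order all_algebra ring.
Import Order.TTheory GRing.Theory Num.Theory.
Set Implicit Arguments. Unset Strict Implicit. Unset Printing Implicit Defensive.
Local Open Scope ring_scope.

Section QuadraticForms.
Variable R : rcfType.

Definition qform n (M : 'M[R]_n) (x : 'cV[R]_n) : R := (x^T *m M *m x) 0 0.

Definition indicator_mx n (C : {set 'I_n}) : 'M[R]_n := diag_mx (\row_i (i \in C)%:R).

Lemma qformE n (M : 'M[R]_n) x :
  qform M x = \sum_i \sum_j x i 0 * M i j * x j 0.
Proof.
rewrite /qform mxE; under eq_bigr => j _ do rewrite mxE big_distrl /=.
rewrite exchange_big /=; apply: eq_bigr => i _; apply: eq_bigr => j _.
by rewrite !mxE.
Qed.

Lemma sqnorm_mulmx m n (S : 'M[R]_(m, n)) x : sqnorm (S *m x) = qform (S^T *m S) x.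
Proof.
rewrite /qform mulmxA -trmx_mul -mulmxA mxE /sqnorm.
by apply: eq_bigr => i _; rewrite !mxE expr2.
Qed.

Lemma indicator_mxE n (C : {set 'I_n}) (x : 'cV[R]_n) i :
  (indicator_mx C *m x) i 0 = (i \in C)%:R * x i 0.
Proof. by rewrite mul_diag_mx !mxE. Qed.

(* Each edge occurs twice in the double sum, hence the factor 2. *)
Lemma qform_lap n (W : 'M[R]_n) x : W^T = W ->
  2 * qform (lap W) x = \sum_i \sum_j W i j * (x i 0 - x j 0) ^+ 2.
Proof.
move=> WT; have Wsym i j : W i j = W j i by rewrite -{1}WT mxE.
have diagE : qform (lap W) x =
    \sum_i \sum_j (W i j * x i 0 ^+ 2 - x i 0 * W i j * x j 0).
  rewrite qformE; apply: eq_bigr => i _.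
  under eq_bigr => j _ do rewrite mxE mulrBr mulrBl.
  rewrite !sumrB; congr (_ - _); set deg := \sum_(k < n) W i k.
  rewrite (bigD1 i) //= eqxx big1 ?addr0; last first.
    by move=> j ji; rewrite eq_sym (negbTE ji) !mul0r mulr0 mul0r.
  by rewrite /deg -big_distrl /=; ring.
have swapE : \sum_i \sum_j (W i j * x j 0 ^+ 2 - x i 0 * W i j * x j 0) =
    \sum_i \sum_j (W i j * x i 0 ^+ 2 - x i 0 * W i j * x j 0).
  rewrite exchange_big /=; apply: eq_bigr => i _; apply: eq_bigr => j _.
  by rewrite (Wsym i j); ring.
rewrite mulr2n mulrDl mul1r diagE -{2}swapE -big_split /=.
by apply: eq_bigr => i _; rewrite -big_split /=; apply: eq_bigr => j _; ring.
Qed.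

Lemma WC_weight_matrix n (W : 'M[R]_n) C : is_weight_matrix W -> is_weight_matrix (WC W C).
Proof.
case=> WT W0 Wd; have Wsym i j : W i j = W j i by rewrite -{1}WT mxE.
split.
- by apply/matrixP => i j; rewrite !mxE andbC addbC Wsym.
- by move=> i j; rewrite mxE; case: ifP => // _; case: ifP => // _; rewrite mulr_ge0.
- by move=> i; rewrite mxE Wd mulr0 andbb addbb; case: ifP.
Qed.

(* Doubling the cut edges pays for splitting an edge between two fibers:
   [(a - b)^2 <= 2 a^2 + 2 b^2]. *)
Lemma edge_energy_le_fibers m (u v : 'I_m) (w a b : R) : 0 <= w ->
  w * (a - b) ^+ 2 <= \sum_r
    (if (u == r) && (v == r) then w else if (u == r) (+) (v == r) then 2 * w else 0)
    * ((u == r)%:R * a - (v == r)%:R * b) ^+ 2.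
Proof.
move=> w0.
have term_ge0 (u' v' r : 'I_m) : 0 <=
    (if (u' == r) && (v' == r) then w else if (u' == r) (+) (v' == r) then 2 * w else 0)
    * ((u' == r)%:R * a - (v' == r)%:R * b) ^+ 2.
  rewrite mulr_ge0 ?sqr_ge0 //.
  by case: ifP => // _; case: ifP => // _; rewrite mulr_ge0.
have [<-|neq_uv] := eqVneq u v.
  by rewrite (bigD1 u) //= eqxx !mul1r lerDl sumr_ge0.
rewrite (bigD1 u) //= (bigD1 v) 1?eq_sym //= addrA !eqxx (negbTE neq_uv) /=.
rewrite -[X in X <= _]addr0; apply: lerD; last exact: sumr_ge0.
rewrite -subr_ge0.
have -> : 2 * w * (1 * a - 0 * b) ^+ 2 + 2 * w * (0 * a - 1 * b) ^+ 2 - w * (a - b) ^+ 2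
  = w * (a + b) ^+ 2 by ring.
by rewrite mulr_ge0 ?sqr_ge0.
Qed.

Lemma qform_lap_le_sum_fibers n m (W : 'M[R]_n) (f : 'I_n -> 'I_m) x :
  is_weight_matrix W ->
  qform (lap W) x <= \sum_r
    qform (lap (WC W [set i | f i == r])) (indicator_mx [set i | f i == r] *m x).
Proof.
move=> Ww; have [WT W_ge0 _] := Ww.
rewrite -(ler_pM2l (_ : 0 < 2 :> R)) // mulr_sumr qform_lap //.
under [X in _ <= X]eq_bigr => r _.
  have [WCT _ _] := WC_weight_matrix [set i | f i == r] Ww.
  rewrite qform_lap //; over.
rewrite [X in _ <= X]exchange_big /=; apply: ler_sum => i _.
rewrite [X in _ <= X]exchange_big /=; apply: ler_sum => j _.
under eq_bigr => r _ do rewrite !indicator_mxE mxE !inE.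
exact: edge_energy_le_fibers (W_ge0 i j).
Qed.

Lemma spectral_norm_sqr_le_sum (I : finType) m n (M : 'M[R]_(m, n)) s
    (q : I -> 'cV[R]_n -> R) (c : I -> R) :
  is_spectral_norm M s ->
  (forall x, sqnorm (M *m x) <= \sum_i q i x) ->
  (forall i x, q i x <= c i ^+ 2 * sqnorm x) ->
  s ^+ 2 <= \sum_i c i ^+ 2.
Proof.
move=> [s0 _ s_min] Mq qc.
have c0 : 0 <= \sum_i c i ^+ 2 by rewrite sumr_ge0 // => i _; rewrite sqr_ge0.
rewrite -(sqr_sqrtr c0) ler_pXn2r ?nnegrE ?sqrtr_ge0 //.
apply: s_min => [|x]; first exact: sqrtr_ge0.
rewrite sqr_sqrtr // mulr_suml; apply: le_trans (Mq x) _.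
by apply: ler_sum => i _; exact: qc.
Qed.

Lemma Lnorm_qform_le n m (L : 'M[R]_n) (M : 'M[R]_(n, m)) s x :
  is_Lnorm L M s -> qform L (M *m x) <= s ^+ 2 * sqnorm x.
Proof.
move=> [X [[[XT _] XX] [_ X_bound _]]].
by have := X_bound x; rewrite -mulmxA sqnorm_mulmx XT XX.
Qed.

End QuadraticForms.

Arguments indicator_mx {R n} C.

Section LaplacianMatrices.
Variable R : rcfType.

Definition laplacian_like n (L : 'M[R]_n) : Prop :=
  [/\ L^T = L, forall i, \sum_j L i j = 0 & forall i j, i != j -> L i j <= 0].

Definition offdiag_weights n (L : 'M[R]_n) : 'M[R]_n :=
  \matrix_(i, j) (if i == j then 0 else - L i j).

Definition aggregation_mx n m (f : 'I_n -> 'I_m) : 'M[R]_(n, m) :=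
  \matrix_(i, r) (f i == r)%:R.

Lemma laplacian_like_lap n (W : 'M[R]_n) : is_weight_matrix W -> laplacian_like (lap W).
Proof.
case=> WT W_ge0 _; have Wsym i j : W i j = W j i by rewrite -{1}WT mxE.
split.
- apply/matrixP => i j; rewrite !mxE eq_sym.
  by have [->//|_] := eqVneq i j; rewrite !mul0r Wsym.
- move=> i; under eq_bigr => j _ do rewrite mxE.
  rewrite sumrB; set deg := \sum_(k < n) W i k.
  rewrite (bigD1 i) //= eqxx mul1r big1 ?addr0 ?subrr // => j ji.
  by rewrite eq_sym (negbTE ji) mul0r.
- by move=> i j ij; rewrite mxE (negbTE ij) mul0r sub0r oppr_le0 W_ge0.
Qed.

Lemma aggregation_mxE n m (f : 'I_n -> 'I_m) (L : 'M[R]_n) r s :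
  ((aggregation_mx f)^T *m L *m aggregation_mx f) r s =
  \sum_j (\sum_i (f i == r)%:R * L i j) * (f j == s)%:R.
Proof.
rewrite mxE; apply: eq_bigr => j _; rewrite !mxE; congr (_ * _).
by apply: eq_bigr => i _; rewrite !mxE.
Qed.

Lemma laplacian_like_aggregate n m (f : 'I_n -> 'I_m) (L : 'M[R]_n) :
  laplacian_like L -> laplacian_like ((aggregation_mx f)^T *m L *m aggregation_mx f).
Proof.
case=> LT L_rows L_offdiag; have Lsym i j : L i j = L j i by rewrite -{1}LT mxE.
split.
- apply/matrixP => r s; rewrite mxE !aggregation_mxE.
  under eq_bigr => j _ do rewrite big_distrl /=.
  under [RHS]eq_bigr => j _ do rewrite big_distrl /=.
  rewrite [RHS]exchange_big /=; apply: eq_bigr => j _; apply: eq_bigr => i _.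
  by rewrite Lsym; ring.
- move=> r; under eq_bigr => s _ do rewrite aggregation_mxE.
  rewrite exchange_big /=.
  have fiber_sum j : \sum_s (f j == s)%:R = 1 :> R.
    rewrite (bigD1 (f j)) //= eqxx big1 ?addr0 // => s.
    by rewrite eq_sym => /negbTE ->.
  under eq_bigr => j _ do rewrite -big_distrr /= fiber_sum mulr1.
  rewrite exchange_big /=; apply: big1 => i _.
  by rewrite -big_distrr /= L_rows mulr0.
- move=> r s rs; rewrite aggregation_mxE; apply: sumr_le0 => j _.
  have [fjs|] := eqVneq (f j) s; last by rewrite mulr0.
  rewrite mulr1; apply: sumr_le0 => i _.
  have [fir|] := eqVneq (f i) r; last by rewrite mul0r.
  rewrite mul1r L_offdiag //; apply: contra_neq rs => eq_ij.
  by rewrite -fir -fjs eq_ij.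
Qed.

Lemma offdiag_weights_weight_matrix n (L : 'M[R]_n) :
  laplacian_like L -> is_weight_matrix (offdiag_weights L).
Proof.
case=> LT _ L_offdiag; split.
- by apply/matrixP => i j; rewrite !mxE eq_sym -{2}LT mxE.
- by move=> i j; rewrite mxE; case: eqVneq => // ij; rewrite oppr_ge0 L_offdiag.
- by move=> i; rewrite mxE eqxx.
Qed.

Lemma lap_offdiag_weights n (L : 'M[R]_n) :
  laplacian_like L -> lap (offdiag_weights L) = L.
Proof.
case=> _ L_rows _; apply/matrixP => i j; rewrite !mxE.
have degE : \sum_k offdiag_weights L i k = L i i.
  rewrite (bigD1 i) //= mxE eqxx add0r.
  under eq_bigr => k ki do rewrite mxE eq_sym (negbTE ki).
  have row_i := L_rows i; rewrite (bigD1 i) //= in row_i.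
  by move/eqP: row_i; rewrite addr_eq0 sumrN => /eqP ->.
rewrite degE; case: eqVneq => [->|_]; first by rewrite subr0 mul1r.
by rewrite mul0r sub0r opprK.
Qed.

End LaplacianMatrices.

Section Coarsening.
Variables (R : rcfType) (N : nat -> nat) (phi : forall k, 'I_(N k) -> 'I_(N k.+1))
  (W : 'M[R]_(N 0)).

Lemma laplacian_like_Lev k : is_weight_matrix W -> laplacian_like (Lev phi W k).
Proof.
move=> Ww; elim: k => [|k IHk]; first exact: laplacian_like_lap.
exact: laplacian_like_aggregate IHk.
Qed.

Lemma PiC_clus k (r : 'I_(N k.+1)) :
  PiC R (clus phi r) = indicator_mx (clus phi r) *m Piperp R phi k.
Proof.
apply/matrixP => i j; rewrite mul_diag_mx !mxE inE.
have [fir|_] := eqVneq (phi i) r; last by rewrite mul0r.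
rewrite mul1r; congr (_ - _).
rewrite (bigD1 r) //= big1 ?addr0; last first.
  by move=> s sr; rewrite !mxE fir eq_sym (negbTE sr) mul0r.
by rewrite !mxE fir eqxx mul1r inE; case: eqP; rewrite ?mul1r ?mul0r.
Qed.
End Coarsening.

Theorem proposition5 (R : rcfType) (N : nat -> nat)
  (phi : forall k, 'I_(N k) -> 'I_(N k.+1))
  (W : 'M[R]_(N 0)) (d : nat) (V : 'M[R]_(N 0, d)) (l : nat) :
  is_weight_matrix W ->
  induces_connected W setT ->
  (forall k, (k <= l)%N -> forall r : 'I_(N k.+1), exists i, phi k i = r) ->
  (forall k, (k <= l)%N -> forall r : 'I_(N k.+1),
     induces_connected (Wlev phi W k) (clus phi r)) ->
  V^T *m V = 1%:M ->
  forall (p : nat) (S : 'M[R]_(p, N l)),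
  S^T *m S = Lev phi W l ->
  forall sigma : R,
  is_spectral_norm (S *m Piperp R phi l *m Amat phi W V l) sigma ->
  forall nC : 'I_(N l.+1) -> R,
  (forall r, is_Lnorm (LC (Wlev phi W l) (clus phi r))
                      (PiC R (clus phi r) *m Amat phi W V l) (nC r)) ->
  sigma ^+ 2 <= \sum_(r < N l.+1) nC r ^+ 2.
Proof.
move=> Ww _ _ _ _ p S SL sigma sigma_norm nC nC_norm.
have Lev_lap := laplacian_like_Lev phi l Ww.
apply: (spectral_norm_sqr_le_sum sigma_norm (q := fun r x =>
  qform (LC (Wlev phi W l) (clus phi r)) (PiC R (clus phi r) *m Amat phi W V l *m x))).
- move=> x /=; rewrite -!mulmxA sqnorm_mulmx SL -(lap_offdiag_weights Lev_lap).
  under eq_bigr => r _ do rewrite PiC_clus -!mulmxA.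
  exact: qform_lap_le_sum_fibers (offdiag_weights_weight_matrix Lev_lap).
- by move=> r x; apply: Lnorm_qform_le.
Qed.
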